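(* Let $m\geq 1$, $n\geq 3$ and $p\geq 2$ be integers, and let $i,j\in V$. If $P$ is a walk in $D^m_n$ of length $pn-1$ from $i$ to $j$, then exactly one of the following holds: (a) $i=1$ and $j=(k-1)(n-1)+n$ for some $k\in\{1,\ldots,m\}$, and $P=P_{1j}\circ C^{r_{p-1}}\circ\cdots\circ C^{r_1}$ for some $r_1,\ldots,r_{p-1}\in\{1,\ldots,m\}$, where $P_{1j}$ is the unique walk of length $n-1$ from $1$ to $j$; (b) $j=1$ and $i=(k-1)(n-1)+2$ for some $k\in\{1,\ldots,m\}$, and $P=C^{r_{p-1}}\circ\cdots\circ C^{r_1}\circ P_{i1}$ for some $r_1,\ldots,r_{p-1}\in\{1,\ldots,m\}$, where $P_{i1}$ is the unique walk of length $n-1$ from $i$ to $1$; (c) there exist $k,r\in\{1,\ldots,m\}$ and $\ell\in\{3,\ldots,n\}$ with $i=(k-1)(n-1)+\ell$ and $j=(r-1)(n-1)+(\ell-1)$, and $P=Q_{1j}\circ C^{r_{p-1}}\circ\cdots\circ C^{r_1}\circ Q_{i1}$ for some $r_1,\ldots,r_{p-1}\in\{1,\ldots,m\}$, where $Q_{i1}$ is the shortest walk from $i$ to $1$, $Q_{1j}$ is the shortest walk from $1$ to $j$, and $Q_{1j}\circ Q_{i1}$ is the unique walk of length $n-1$ from $i$ to $j$.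
   Context: For integers $m\geq 1$, $n\geq 3$, the oriented Dutch windmill graph $D^m_n$ is the directed graph with vertex set $V=\{1,2,\ldots,m(n-1)+1\}$ whose directed edges $(a,b)$ are exactly: $(1,(k-1)(n-1)+2)$ for $k\in\{1,\ldots,m\}$; $((k-1)(n-1)+i,(k-1)(n-1)+i+1)$ for $k\in\{1,\ldots,m\}$ and $i\in\{2,\ldots,n-1\}$; and $((k-1)(n-1)+n,1)$ for $k\in\{1,\ldots,m\}$. A walk is a sequence of vertices $\langle v_1,\ldots,v_r\rangle$ in which each $(v_t,v_{t+1})$ is an edge; its length is $r-1$. For $k\in\{1,\ldots,m\}$, $C^k$ is the closed walk $\langle 1,(k-1)(n-1)+2,\ldots,(k-1)(n-1)+n,1\rangle$ of length $n$. If $P=\langle v_1,\ldots,v_r\rangle$ and $Q=\langle w_1,\ldots,w_s\rangle$ are walks with $w_1=v_r$, then $Q\circ P=\langle v_1,\ldots,v_r,w_2,\ldots,w_s\rangle$ (first traverse $P$, then $Q$). *)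

From mathcomp Require Import all_boot.
Set Implicit Arguments. Unset Strict Implicit. Unset Printing Implicit Defensive.

Definition inV (m n v : nat) : bool := (1 <= v) && (v <= m * (n - 1) + 1).

Definition dw_edge (m n : nat) : rel nat := fun a b =>
  has (fun k =>
    [|| (a == 1) && (b == (k - 1) * (n - 1) + 2),
        [&& (k - 1) * (n - 1) + 2 <= a, a <= (k - 1) * (n - 1) + (n - 1) & b == a.+1]
      | (a == (k - 1) * (n - 1) + n) && (b == 1)])
    (iota 1 m).

Definition is_walk (m n : nat) (W : seq nat) : Prop :=
  [/\ W != [::], all (inV m n) W & path (dw_edge m n) (head 0 W) (behead W)].

Definition walk_len (W : seq nat) : nat := (size W).-1.

Definition walk_from_to (m n : nat) (W : seq nat) (i j : nat) : Prop :=
  [/\ is_walk m n W, head 0 W = i & last 0 W = j].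

Definition cyc (n k : nat) : seq nat :=
  1 :: [seq (k - 1) * (n - 1) + t | t <- iota 2 (n - 1)] ++ [:: 1].

(* Q \o P = <v_1,...,v_r,w_2,...,w_s>  (first P, then Q) *)
Definition wcomp (Q P : seq nat) : seq nat := P ++ behead Q.

(* C^{r_{p-1}} \o ... \o C^{r_1} for rs = [:: r_1; ...; r_{p-1}] (C^{r_1} traversed first) *)
Definition cycs (n : nat) (rs : seq nat) : seq nat :=
  foldl (fun acc r => wcomp (cyc n r) acc) [:: 1] rs.

Definition in_range (m : nat) (rs : seq nat) : bool := all (fun r => (1 <= r) && (r <= m)) rs.

Definition unique_walk (m n : nat) (W : seq nat) (i j l : nat) : Prop :=
  [/\ walk_from_to m n W i j, walk_len W = l &
      forall W', walk_from_to m n W' i j -> walk_len W' = l -> W' = W].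

Definition shortest_walk (m n : nat) (W : seq nat) (i j : nat) : Prop :=
  walk_from_to m n W i j /\
  forall W', walk_from_to m n W' i j ->
    walk_len W <= walk_len W' /\ (walk_len W' = walk_len W -> W' = W).

Definition exactly_one3 (A B C : Prop) : Prop :=
  [\/ A /\ ~ B /\ ~ C, ~ A /\ B /\ ~ C | ~ A /\ ~ B /\ C].

From mathcomp Require Import all_boot zify.
Set Implicit Arguments. Unset Strict Implicit. Unset Printing Implicit Defensive.

(* Every vertex other than the hub 1 has exactly one out-neighbour, so a walk is
   determined by its first vertex and by the blade it enters each time it leaves
   the hub.  From the t-th vertex of a blade a walk reaches the hub after
   n - t + 1 steps, and a walk of length q n + c (c < n) from the hub consists of
   q full cycles followed by c steps into one blade.  For a walk of length p n - 1
   this leaves three shapes, told apart by which endpoint is the hub; applying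
   the same description to competing walks gives the minimality and uniqueness
   claims. *)

Lemma exactly_one3_intro (A B C a b : Prop) :
  (A -> a /\ ~ b) -> (B -> ~ a /\ b) -> (C -> ~ a /\ ~ b) ->
  [\/ A, B | C] -> exactly_one3 A B C.
Proof.
by move=> hA hB hC; case=> x; [apply: Or31 | apply: Or32 | apply: Or33]; tauto.
Qed.

Section Windmill.
Variables m n : nat.
Hypothesis m_gt0 : 0 < m.
Hypothesis n_gt2 : 2 < n.
Local Notation edge := (dw_edge m n).

(* [vert k t], 2 <= t <= n, is the t-th vertex of blade k; [route k t] lists the
   vertices following [vert k t] up to the hub, so [1 :: route r 1] is C^r. *)
Definition vert k t := (k - 1) * (n - 1) + t.
Definition arc k a c := [seq vert k t | t <- iota a c].
Definition route k t := arc k t.+1 (n - t) ++ [:: 1].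
Definition laps rs := flatten [seq route r 1 | r <- rs].

Lemma vert_inj k k' t t' : 0 < k -> 0 < k' -> 2 <= t <= n -> 2 <= t' <= n ->
  vert k t = vert k' t' -> k = k' /\ t = t'.
Proof.
have coords k1 t1 : 2 <= t1 <= n ->
    (vert k1 t1 - 2) %/ (n - 1) = k1 - 1 /\ (vert k1 t1 - 2) %% (n - 1) = t1 - 2.
  move=> t1_range; have -> : vert k1 t1 - 2 = (k1 - 1) * (n - 1) + (t1 - 2).
    by rewrite /vert; move: ((k1 - 1) * (n - 1)) => x; lia.
  rewrite divnMDl ?modnMDl ?divn_small ?modn_small; lia.
move=> k_gt0 k'_gt0 t_range t'_range eq_vert.
have [dk mk] := coords k t t_range; have [dk' mk'] := coords k' t' t'_range.
by move: dk mk; rewrite eq_vert dk' mk'; lia.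
Qed.

Lemma vert_gt1 k t : 1 < t -> 1 < vert k t.
Proof. by move=> t_gt1; apply: leq_trans t_gt1 (leq_addl _ _). Qed.

Lemma vert_decomp v : inV m n v -> v != 1 ->
  exists k t, [/\ 0 < k <= m, 2 <= t <= n & v = vert k t].
Proof.
move=> /andP[v_gt0 v_le] /eqP v_neq1.
exists ((v - 2) %/ (n - 1)).+1, ((v - 2) %% (n - 1) + 2).
have mod_lt : (v - 2) %% (n - 1) < n - 1 by rewrite ltn_pmod //; lia.
have div_lt : (v - 2) %/ (n - 1) < m.
  by rewrite ltn_divLR; [move: (m * (n - 1)) v_le => x; lia | lia].
have := divn_eq (v - 2) (n - 1).
move: ((v - 2) %/ (n - 1)) ((v - 2) %% (n - 1)) mod_lt div_lt => q r r_lt q_lt eq_v.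
by rewrite /vert subSS subn0; split; lia.
Qed.

Lemma inV_vert k t : 0 < k <= m -> 0 < t <= n -> inV m n (vert k t).
Proof. by rewrite /inV /vert; nia. Qed.

Lemma edge_inV a b : edge a b -> inV m n b.
Proof.
case/hasP=> k; rewrite mem_iota /inV => k_range.
case/or3P=> [/andP[_ /eqP->] | /and3P[_ a_le /eqP->] | /andP[_ /eqP->]]; nia.
Qed.

Lemma path_inV x s : inV m n x -> path edge x s -> all (inV m n) (x :: s).
Proof.
elim: s x => [|y s IHs] x /= x_in; first by rewrite x_in.
by case/andP=> /edge_inV y_in /(IHs y y_in); rewrite x_in.
Qed.

Lemma walk_from_toP W i j : inV m n i ->
  walk_from_to m n W i j <-> exists2 s, W = i :: s & path edge i s /\ last i s = j.
Proof.
move=> i_in; split.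
  by case: W => [|x s] [[//= _ _ path_s] /= <- <-]; exists s.
by move=> [s -> [path_s last_s]]; split=> //; split=> //; apply: path_inV.
Qed.

Lemma edge_hubP w : reflect (exists2 k, 0 < k <= m & w = vert k 2) (edge 1 w).
Proof.
apply: (iffP hasP) => [[k] | [k k_range ->]].
  rewrite mem_iota => k_range.
  case/or3P=> [/andP[_ /eqP->] | /and3P[lo _ _] | /andP[/eqP tip _]]; last by nia.
    by exists k => //; lia.
  by nia.
by exists k; rewrite ?mem_iota ?eqxx; lia.
Qed.

Lemma edge_bladeE k t w : 0 < k <= m -> 2 <= t <= n ->
  edge (vert k t) w = (w == if t == n then 1 else vert k t.+1).
Proof.
move=> k_range t_range; apply/idP/eqP => [|->].
  case/hasP=> k'; rewrite mem_iota => k'_range.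
  case/or3P=> [/andP[/eqP] | /and3P[lo hi /eqP->] | /andP[/eqP tip /eqP->]].
  - by rewrite /vert; nia.
  - have t'_range : 2 <= vert k t - (k' - 1) * (n - 1) <= n - 1 by lia.
    have [/esym k'E t_eq] : k = k' /\ t = vert k t - (k' - 1) * (n - 1).
      by apply: vert_inj; [lia | lia | lia | lia | rewrite {2}/vert subnKC //; lia].
    by subst k'; rewrite ifN; [rewrite /vert addnS | lia].
  - have [_ ->] : k = k' /\ t = n by apply: (vert_inj _ _ _ _ tip); lia.
    by rewrite eqxx.
apply/hasP; exists k; first by rewrite mem_iota; lia.
by case: ifP => [/eqP-> | /negbT t_neq_n]; apply/or3P; [apply: Or33 | apply: Or32];
  rewrite /vert; lia.
Qed.

Lemma size_arc k a c : size (arc k a c) = c.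
Proof. by rewrite size_map size_iota. Qed.

Lemma size_route k t : size (route k t) = n - t + 1.
Proof. by rewrite size_cat size_arc. Qed.

Lemma last_arc k a d : last (vert k a) (arc k a.+1 d) = vert k (a + d).
Proof. by elim: d a => [|d IHd] a; rewrite ?addn0 //= IHd addSnnS. Qed.

Lemma last_hub_arc r c : 0 < c -> last 1 (arc r 2 c) = vert r c.+1.
Proof. by case: c => // c _; rewrite /= last_arc add2n. Qed.

Lemma last_route x k t : last x (route k t) = 1.
Proof. by rewrite last_cat. Qed.

Lemma route_cons k t : t < n -> route k t = vert k t.+1 :: route k t.+1.
Proof. by move=> t_lt_n; rewrite /route -(subnSK t_lt_n). Qed.

Lemma path_arc k a d : 0 < k <= m -> 2 <= a -> a + d <= n ->
  path edge (vert k a) (arc k a.+1 d).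
Proof.
move=> k_range; elim: d a => [|d IHd] a a_ge2 ad_le //=.
by rewrite edge_bladeE ?ifN ?eqxx ?IHd //; lia.
Qed.

Lemma path_route k t : 0 < k <= m -> 2 <= t <= n -> path edge (vert k t) (route k t).
Proof.
move=> k_range t_range; rewrite cat_path path_arc ?last_arc //=; try lia.
by rewrite subnKC ?edge_bladeE ?eqxx //; lia.
Qed.

Lemma path_hub_arc r c : 0 < r <= m -> c < n -> path edge 1 (arc r 2 c).
Proof.
case: c => [//|c] r_range c_lt_n /=.
apply/andP; split; first by apply/edge_hubP; exists r.
by apply: path_arc => //; lia.
Qed.

Lemma last_laps_cat rs s : last 1 (laps rs ++ s) = last 1 s.
Proof.
rewrite last_cat; congr last.
by elim: rs => //= r rs IHrs; rewrite last_cat last_route.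
Qed.

Lemma cycsE rs : cycs n rs = 1 :: laps rs.
Proof.
suff foldlE acc : foldl (fun acc r => wcomp (cyc n r) acc) acc rs = acc ++ laps rs.
  by rewrite /cycs foldlE.
by elim: rs acc => [|r rs IHrs] acc /=; rewrite ?cats0 // IHrs -catA.
Qed.

Lemma path_blade k t s : 0 < k <= m -> 2 <= t <= n -> path edge (vert k t) s ->
  (size s <= n - t /\ s = arc k t.+1 (size s)) \/
  exists2 s1, s = route k t ++ s1 & path edge 1 s1.
Proof.
move=> k_range; elim: s t => [|y s IHs] t t_range /=; first by left.
rewrite edge_bladeE // => /andP[/eqP-> path_s].
case: ifP path_s => [/eqP t_n | /negbT t_neq_n] path_s.
  by right; exists s; rewrite // t_n /route subnn.
have t1_range : 2 <= t.+1 <= n by lia.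
have [[size_s sE] | [s1 sE path_s1]] := IHs t.+1 t1_range path_s.
  by left; split; [lia | rewrite {1}sE].
by right; exists s1; rewrite // route_cons ?sE //; lia.
Qed.

Lemma path_hub_step s : path edge 1 s -> s != [::] -> exists2 r, 0 < r <= m &
  (size s < n /\ s = arc r 2 (size s)) \/ exists2 s1, s = route r 1 ++ s1 & path edge 1 s1.
Proof.
case: s => [//|y s] /= /andP[/edge_hubP[r r_range ->] path_s] _; exists r => //.
have two_range : 2 <= 2 <= n by lia.
have [[size_s sE] | [s1 -> path_s1]] := path_blade r_range two_range path_s.
  by left; split; [lia | rewrite {1}sE].
by right; exists s1; rewrite // (@route_cons r 1) //; lia.
Qed.

Lemma path_hub_laps q c s : c < n -> path edge 1 s -> size s = q * n + c ->
  exists rs r, [/\ size rs = q, in_range m rs, 0 < r <= m & s = laps rs ++ arc r 2 c].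
Proof.
move=> c_lt_n; elim: q s => [|q IHq] s path_s size_s.
  have [s0 | s_ne] := eqVneq s [::].
    move: size_s; rewrite s0 mul0n add0n => <-.
    by exists [::], 1; split=> //; lia.
  have [r r_range [[_ sE] | [s1 sE _]]] := path_hub_step path_s s_ne.
    by exists [::], r; rewrite {1}sE size_s.
  by move: size_s; rewrite sE size_cat size_route; lia.
have s_ne : s != [::] by rewrite -size_eq0 size_s mulSn; lia.
have [r r_range [[size_lt _] | [s1 sE path_s1]]] := path_hub_step path_s s_ne.
  by move: size_lt; rewrite size_s mulSn; lia.
have size_s1 : size s1 = q * n + c.
  by move: size_s; rewrite sE size_cat size_route mulSn; lia.
have [rs [r' [size_rs rs_range r'_range s1E]]] := IHq s1 path_s1 size_s1.
exists (r :: rs), r'; split=> //=; first by rewrite size_rs.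
  exact/andP.
by rewrite sE s1E catA.
Qed.

(* The endpoint fixes the length modulo n, hence the final partial blade. *)
Lemma path_hub_to_vert r c s : 0 < r <= m -> 0 < c < n -> path edge 1 s ->
  last 1 s = vert r c.+1 -> exists2 rs, in_range m rs & s = laps rs ++ arc r 2 c.
Proof.
move=> r_range c_range path_s last_s; have n_gt0 : 0 < n by lia.
have [rs [r' [_ rs_range r'_range sE]]] :=
  path_hub_laps (ltn_pmod (size s) n_gt0) path_s (divn_eq _ _).
move: (ltn_pmod (size s) n_gt0) sE last_s.
case: (size s %% n) => [|d] d_lt sE; rewrite sE last_laps_cat.
  have c1_gt1 : 1 < c.+1 by lia.
  by move=> /= one_eq; have := vert_gt1 r c1_gt1; rewrite -one_eq.
rewrite last_hub_arc // => last_eq.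
have [-> cE] : r' = r /\ d.+2 = c.+1 by apply: (vert_inj _ _ _ _ last_eq); lia.
by exists rs; rewrite // (_ : d.+1 = c) //; lia.
Qed.

Lemma shortest_unique_walk W i j :
  shortest_walk m n W i j -> unique_walk m n W i j (walk_len W).
Proof. by case=> walk_W minW; split=> // W' /minW[_ len_eq] /len_eq. Qed.

Lemma shortest_to_hub k l : 0 < k <= m -> 2 <= l <= n ->
  shortest_walk m n (vert k l :: route k l) (vert k l) 1.
Proof.
move=> k_range l_range; have v_in : inV m n (vert k l) by apply: inV_vert; lia.
split.
  by apply/walk_from_toP => //; exists (route k l); rewrite ?path_route ?last_route.
move=> W' /(walk_from_toP _ _ v_in) [s -> [path_s last_s]]; rewrite /walk_len /=.
have [[_ sE] | [s1 sE _]] := path_blade k_range l_range path_s.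
  have l_gt1 : 1 < l + size s by lia.
  by move: last_s; rewrite sE last_arc => one_eq; have := vert_gt1 k l_gt1; rewrite one_eq.
rewrite sE size_cat size_route; split=> [|len_eq]; first exact: leq_addr.
by rewrite (size0nil (_ : size s1 = 0)) ?cats0 //; lia.
Qed.

Lemma shortest_from_hub r c : 0 < r <= m -> 0 < c < n ->
  shortest_walk m n (1 :: arc r 2 c) 1 (vert r c.+1).
Proof.
move=> r_range c_range; have one_in : inV m n 1 by rewrite /inV leq_addl.
split.
  apply/walk_from_toP => //; exists (arc r 2 c); split; first by apply: path_hub_arc; lia.
  by rewrite last_hub_arc //; lia.
move=> W' /(walk_from_toP _ _ one_in) [s -> [path_s last_s]]; rewrite /walk_len /=.
have [rs _ ->] := path_hub_to_vert r_range c_range path_s last_s.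
rewrite size_cat size_arc; split=> [|len_eq]; first exact: leq_addl.
by rewrite (size0nil (_ : size (laps rs) = 0)) //; lia.
Qed.

Lemma unique_walk_across_hub k r l : 0 < k <= m -> 0 < r <= m -> 3 <= l <= n ->
  unique_walk m n (vert k l :: route k l ++ arc r 2 (l - 2))
              (vert k l) (vert r (l - 1)) (n - 1).
Proof.
move=> k_range r_range l_range; have v_in : inV m n (vert k l) by apply: inV_vert; lia.
have l2_range : 0 < l - 2 < n by lia.
have l1E : l - 1 = (l - 2).+1 by lia.
split.
- apply/walk_from_toP => //; exists (route k l ++ arc r 2 (l - 2)); split.
    by rewrite cat_path path_route ?last_route ?path_hub_arc //; lia.
  by rewrite last_cat last_route l1E last_hub_arc //; lia.
- by rewrite /walk_len /= size_cat size_route size_arc; lia.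
move=> W' /(walk_from_toP _ _ v_in) [s -> [path_s last_s]]; rewrite /walk_len /= => size_s.
have l_range' : 2 <= l <= n by lia.
have [[size_le _] | [s1 sE path_s1]] := path_blade k_range l_range' path_s; first lia.
rewrite sE last_cat last_route l1E in last_s.
have [rs _ s1E] := path_hub_to_vert r_range l2_range path_s1 last_s.
move: size_s; rewrite sE s1E size_cat size_route size_cat size_arc => size_s.
by rewrite (size0nil (_ : size (laps rs) = 0)) //; lia.
Qed.

Definition hub_to_tip_form q i j P :=
  (i = 1 /\ exists2 k, 1 <= k <= m & j = vert k n) /\
  exists W rs, [/\ unique_walk m n W 1 j (n - 1), size rs = q, in_range m rs &
                  P = wcomp W (cycs n rs)].

Definition base_to_hub_form q i j P :=
  (j = 1 /\ exists2 k, 1 <= k <= m & i = vert k 2) /\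
  exists W rs, [/\ unique_walk m n W i 1 (n - 1), size rs = q, in_range m rs &
                  P = wcomp (cycs n rs) W].

Definition across_hub_form q i j P :=
  exists k r l,
    [/\ 1 <= k <= m, 1 <= r <= m, 3 <= l <= n, i = vert k l & j = vert r (l - 1)] /\
  exists Q1 Q2 rs,
    [/\ shortest_walk m n Q1 i 1, shortest_walk m n Q2 1 j,
        unique_walk m n (wcomp Q2 Q1) i j (n - 1), size rs = q /\ in_range m rs &
        P = wcomp Q2 (wcomp (cycs n rs) Q1)].

Lemma walk_from_hub q s : path edge 1 s -> size s = q * n + (n - 1) ->
  hub_to_tip_form q 1 (last 1 s) (1 :: s).
Proof.
move=> path_s size_s; have n1_lt : n - 1 < n by lia.
have [rs [r [size_rs rs_range r_range ->]]] := path_hub_laps n1_lt path_s size_s.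
have n1E : (n - 1).+1 = n by lia.
rewrite last_laps_cat last_hub_arc ?n1E; last by lia. split; first by split=> //; exists r.
exists (1 :: arc r 2 (n - 1)), rs; split=> //; last by rewrite cycsE.
have c_range : 0 < n - 1 < n by lia.
have := shortest_unique_walk (shortest_from_hub r_range c_range).
by rewrite n1E /walk_len /= size_arc.
Qed.

Lemma path_blade_laps k l q s : 0 < k <= m -> 2 <= l <= n -> path edge (vert k l) s ->
  size s = q * n + (n - 1) ->
  exists rs r, [/\ size rs = q, in_range m rs, 0 < r <= m &
                   s = route k l ++ laps rs ++ arc r 2 (l - 2)].
Proof.
move=> k_range l_range path_s size_s.
have [[size_le _] | [s1 sE path_s1]] := path_blade k_range l_range path_s.
  by move: size_le; rewrite size_s; lia.
have l2_lt : l - 2 < n by lia.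
have size_s1 : size s1 = q * n + (l - 2).
  by move: size_s; rewrite sE size_cat size_route; lia.
have [rs [r [size_rs rs_range r_range s1E]]] := path_hub_laps l2_lt path_s1 size_s1.
by exists rs, r; rewrite sE s1E.
Qed.

Lemma walk_into_hub k q s : 0 < k <= m -> path edge (vert k 2) s ->
  size s = q * n + (n - 1) ->
  base_to_hub_form q (vert k 2) (last (vert k 2) s) (vert k 2 :: s).
Proof.
move=> k_range path_s size_s; have two_range : 2 <= 2 <= n by lia.
have [rs [r [size_rs rs_range _ ->]]] := path_blade_laps k_range two_range path_s size_s.
rewrite last_cat last_route last_laps_cat subnn cats0; split; first by split=> //; exists k.
exists (vert k 2 :: route k 2), rs; split=> //; last by rewrite cycsE.
have := shortest_unique_walk (shortest_to_hub k_range two_range).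
by rewrite /walk_len /= size_route (_ : n - 2 + 1 = n - 1) //; lia.
Qed.

Lemma walk_across_hub k l q s : 0 < k <= m -> 3 <= l <= n -> path edge (vert k l) s ->
  size s = q * n + (n - 1) ->
  across_hub_form q (vert k l) (last (vert k l) s) (vert k l :: s).
Proof.
move=> k_range l_range path_s size_s; have l_range' : 2 <= l <= n by lia.
have [rs [r [size_rs rs_range r_range ->]]] :=
  path_blade_laps k_range l_range' path_s size_s.
have l1E : (l - 2).+1 = l - 1 by lia.
rewrite last_cat last_route last_laps_cat last_hub_arc ?l1E; last by lia.
exists k, r, l; split=> //.
exists (vert k l :: route k l), (1 :: arc r 2 (l - 2)), rs; split=> //.
- exact: shortest_to_hub.
- by rewrite -l1E; apply: shortest_from_hub; lia.
- exact: unique_walk_across_hub.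
by rewrite cycsE /wcomp /= catA.
Qed.

End Windmill.

Theorem lemma2p5 (m n p i j : nat) (P : seq nat) :
  1 <= m -> 3 <= n -> 2 <= p -> inV m n i -> inV m n j ->
  walk_from_to m n P i j -> walk_len P = p * n - 1 ->
  exactly_one3
    ((i = 1 /\ exists2 k, 1 <= k <= m & j = (k - 1) * (n - 1) + n) /\
     exists W rs, [/\ unique_walk m n W 1 j (n - 1), size rs = p - 1, in_range m rs &
                     P = wcomp W (cycs n rs)])
    ((j = 1 /\ exists2 k, 1 <= k <= m & i = (k - 1) * (n - 1) + 2) /\
     exists W rs, [/\ unique_walk m n W i 1 (n - 1), size rs = p - 1, in_range m rs &
                     P = wcomp (cycs n rs) W])
    (exists k r l, [/\ 1 <= k <= m, 1 <= r <= m, 3 <= l <= n,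
        i = (k - 1) * (n - 1) + l & j = (r - 1) * (n - 1) + (l - 1)] /\
        exists Q1 Q2 rs,
          [/\ shortest_walk m n Q1 i 1, shortest_walk m n Q2 1 j,
              unique_walk m n (wcomp Q2 Q1) i j (n - 1),
              size rs = p - 1 /\ in_range m rs &
              P = wcomp Q2 (wcomp (cycs n rs) Q1)]).
Proof.
move=> m_gt0 n_gt2 p_gt1 i_in _ /(walk_from_toP m_gt0 n_gt2 _ _ i_in) [s -> [path_s <-]].
rewrite /walk_len /= => size_s.
have {}size_s : size s = (p - 1) * n + (n - 1) by rewrite size_s; nia.
apply: (exactly_one3_intro (a := i = 1) (b := last i s = 1)).
- by case=> [[-> [k _ ->]] _]; split=> //; nia.
- by case=> [[-> [k _ ->]] _]; split=> //; nia.
- by case=> k [r [l [[_ _ l_range -> ->] _]]]; split; nia.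
have [i1 | i_neq1] := eqVneq i 1.
  by subst i; apply: Or31; exact: (walk_from_hub m_gt0 n_gt2 path_s size_s).
have [k [l [k_range l_range iE]]] := vert_decomp m_gt0 n_gt2 i_in i_neq1; subst i.
have [l_le2 | l_gt2] := leqP l 2.
  rewrite (_ : l = 2) in path_s *; last by lia.
  by apply: Or32; exact: (walk_into_hub m_gt0 n_gt2 k_range path_s size_s).
have l_range' : 3 <= l <= n by lia.
by apply: Or33; exact: (walk_across_hub m_gt0 n_gt2 k_range l_range' path_s size_s).
Qed.
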